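(* Let $\{x_j\}_{j\ge1}$ be a bounded sequence in $\mathbb{R}$ taking infinitely many distinct values, and $\{a_j\}_{j\ge1}$ a summable sequence of positive numbers. Let $\mu=\sum_{j\ge1}a_j\delta_{x_j}$ and $d=\sup_{j,k}|x_j-x_k|$. Then the monic orthogonal polynomials $P_n(x;d\mu)$ satisfy, for all $n\ge1$, $$\|P_n\|_{L^2(\mathbb{R},d\mu)}\le d^n\Bigl(\sum_{j=n+1}^\infty a_j\Bigr)^{1/2}.$$ *)

From Stdlib Require Import Reals List.
Open Scope R_scope.

Fixpoint low_sum (c : nat -> R) (t : R) (n : nat) : R :=
  match n with
  | O => 0
  | S m => low_sum c t m + c m * t ^ m
  end.

Definition monic_poly (n : nat) (c : nat -> R) (t : R) : R :=
  t ^ n + low_sum c t n.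

(* Discrete measure mu = sum_j a_j delta_{x_j}.
   A monic degree-n polynomial (coefficients c) is the monic orthogonal
   polynomial P_n(x; d mu) iff it is orthogonal in L^2(mu) to every
   monomial t^k with k < n (equivalently to all polynomials of degree < n). *)
Definition is_monic_OP (a x : nat -> R) (n : nat) (c : nat -> R) : Prop :=
  forall k : nat, (k < n)%nat ->
    infinite_sum (fun j => a j * monic_poly n c (x j) * (x j) ^ k) 0.

Definition L2sq_is (a x : nat -> R) (p : R -> R) (s : R) : Prop :=
  infinite_sum (fun j => a j * (p (x j)) ^ 2) s.

From Stdlib Require Import Reals List Lra Lia.
Open Scope R_scope.

(* The monic orthogonal polynomial P = P_n minimises the
   L^2(mu) norm among monic polynomials of degree n: if Q is monic of degree
   n then D = Q - P has degree < n, hence is orthogonal to P, and pointwise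
   a_j Q(x_j)^2 = a_j P(x_j)^2 + 2 a_j P(x_j) D(x_j) + a_j D(x_j)^2, so every
   partial sum of ||Q||^2 dominates the corresponding partial sum of a
   series converging to ||P||^2 (no convergence of ||Q||^2 is needed).
   We compare with the node polynomial Q(t) = (t - x_0) ... (t - x_{n-1}),
   which vanishes at the first n nodes and satisfies |Q(x_j)| <= d^n
   elsewhere, so ||Q||^2 <= d^(2n) * sum_{j >= n} a_j. *)

Definition deg_lt (m : nat) (f : R -> R) : Prop :=
  exists e : nat -> R, forall t, f t = low_sum e t m.

Definition monic_deg (m : nat) (Q : R -> R) : Prop :=
  exists r : R -> R, deg_lt m r /\ forall t, Q t = t ^ m + r t.

Lemma low_sum_ext (e e' : nat -> R) (t : R) (m : nat) :
  (forall k, (k < m)%nat -> e k = e' k) -> low_sum e t m = low_sum e' t m.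
Proof.
  induction m as [|m IH]; simpl; intros He; [reflexivity|].
  rewrite IH by (intros; apply He; lia). rewrite He by lia. reflexivity.
Qed.

Lemma low_sum_lin (s s' : R) (e e' : nat -> R) (t : R) (m : nat) :
  low_sum (fun k => s * e k + s' * e' k) t m
  = s * low_sum e t m + s' * low_sum e' t m.
Proof. induction m as [|m IH]; simpl; [ring | rewrite IH; ring]. Qed.

Lemma low_sum_mul_t (e : nat -> R) (t : R) (m : nat) :
  t * low_sum e t m
  = low_sum (fun k => match k with O => 0 | S k => e k end) t (S m).
Proof. induction m as [|m IH]; simpl in *; [ring | rewrite <- IH; ring]. Qed.

Lemma deg_lt_lin (m : nat) (s s' : R) (f g : R -> R) :
  deg_lt m f -> deg_lt m g -> deg_lt m (fun t => s * f t + s' * g t).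
Proof.
  intros [e He] [e' He']. exists (fun k => s * e k + s' * e' k). intros t.
  rewrite low_sum_lin, He, He'. reflexivity.
Qed.

Lemma deg_lt_mul_t (m : nat) (f : R -> R) :
  deg_lt m f -> deg_lt (S m) (fun t => t * f t).
Proof. intros [e He]. eexists. intros t. rewrite He. apply low_sum_mul_t. Qed.

Lemma deg_lt_succ (m : nat) (f : R -> R) : deg_lt m f -> deg_lt (S m) f.
Proof.
  intros [e He]. exists (fun k => if Nat.ltb k m then e k else 0). intros t.
  simpl. rewrite Nat.ltb_irrefl, He, Rmult_0_l, Rplus_0_r.
  apply low_sum_ext. intros k Hk. apply Nat.ltb_lt in Hk. now rewrite Hk.
Qed.

Lemma deg_lt_pow (m : nat) : deg_lt (S m) (fun t => t ^ m).
Proof.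
  exists (fun k => if Nat.eqb k m then 1 else 0). intros t. simpl.
  rewrite Nat.eqb_refl, (low_sum_ext _ (fun k => 0 * 0 + 0 * 0)).
  - rewrite low_sum_lin. ring.
  - intros k Hk. destruct (Nat.eqb_spec k m); [lia | ring].
Qed.

Lemma monic_deg_sub (m : nat) (Q : R -> R) (c : nat -> R) :
  monic_deg m Q -> deg_lt m (fun t => Q t - monic_poly m c t).
Proof.
  intros [r [Hr HQ]].
  assert (Hc : deg_lt m (fun t => low_sum c t m)) by (exists c; reflexivity).
  destruct (deg_lt_lin m 1 (-1) r _ Hr Hc) as [e He].
  exists e. intros t. rewrite <- He, HQ. unfold monic_poly. ring.
Qed.

Lemma const_cv (s : R) : Un_cv (fun _ : nat => s) s.
Proof.
  intros eps Heps. exists O. intros. unfold Rdist.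
  rewrite Rminus_diag, Rabs_R0. lra.
Qed.

Lemma isum_ext (f g : nat -> R) (l : R) :
  (forall j, f j = g j) -> infinite_sum f l -> infinite_sum g l.
Proof. intros H. apply Un_cv_ext. intros N. apply sum_eq. auto. Qed.

Lemma isum_lin (s s' : R) (f g : nat -> R) (l l' : R) :
  infinite_sum f l -> infinite_sum g l' ->
  infinite_sum (fun j => s * f j + s' * g j) (s * l + s' * l').
Proof.
  intros Hf Hg.
  assert (Hl := CV_plus _ _ _ _ (CV_mult _ _ _ _ (const_cv s) Hf)
                               (CV_mult _ _ _ _ (const_cv s') Hg)).
  eapply Un_cv_ext; [|exact Hl]. intros N. cbv beta.
  rewrite plus_sum, !scal_sum.
  f_equal; apply sum_eq; intros; ring.
Qed.

Lemma isum_zero : infinite_sum (fun _ => 0) 0.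
Proof.
  eapply Un_cv_ext; [|apply const_cv].
  intros N. symmetry. apply sum_eq_R0. reflexivity.
Qed.

Lemma monic_OP_orth (a x c : nat -> R) (n : nat) (f : R -> R) :
  is_monic_OP a x n c -> deg_lt n f ->
  infinite_sum (fun j => a j * monic_poly n c (x j) * f (x j)) 0.
Proof.
  intros hOP [e He].
  assert (Hlow : forall m, (m <= n)%nat ->
    infinite_sum (fun j => a j * monic_poly n c (x j) * low_sum e (x j) m) 0).
  { induction m as [|m IH]; intros Hm.
    - eapply isum_ext; [|exact isum_zero]. intros j. simpl. ring.
    - replace 0 with (1 * 0 + e m * 0) by ring.
      eapply isum_ext; [|apply isum_lin; [apply IH; lia | apply (hOP m); lia]].
      intros j. simpl. ring. }
  eapply isum_ext; [|exact (Hlow n (Nat.le_refl n))].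
  intros j. cbv beta. now rewrite He.
Qed.

Lemma monic_OP_norm_le (a x c : nat -> R) (n : nat) (N2 B : R) (Q : R -> R) :
  (forall j, 0 <= a j) -> is_monic_OP a x n c ->
  L2sq_is a x (monic_poly n c) N2 -> monic_deg n Q ->
  (forall N, sum_f_R0 (fun j => a j * Q (x j) ^ 2) N <= B) ->
  N2 <= B.
Proof.
  intros Ha hOP hN2 HQ HB.
  set (P := monic_poly n c). set (D := fun t => Q t - P t).
  assert (Horth := monic_OP_orth a x c n D hOP (monic_deg_sub n Q c HQ)).
  assert (Hcv := isum_lin 1 2 _ _ _ _ hN2 Horth).
  replace N2 with (1 * N2 + 2 * 0) by ring.
  refine (Rle_cv_lim _ Hcv (const_cv B)). intros N.
  eapply Rle_trans; [|apply (HB N)]. apply sum_Rle. intros j _.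
  (* a Q^2 = a P^2 + 2 a P D + a D^2 with the last term nonnegative *)
  assert (Hsq : 0 <= a j * (D (x j) * D (x j)))
    by (apply Rmult_le_pos; [apply Ha | apply Rle_0_sqr]).
  replace (Q (x j)) with (P (x j) + D (x j)) by (unfold D; ring).
  fold P. nra.
Qed.

Fixpoint node_poly (x : nat -> R) (m : nat) (t : R) : R :=
  match m with
  | O => 1
  | S m => node_poly x m t * (t - x m)
  end.

Lemma node_poly_monic (x : nat -> R) (m : nat) : monic_deg m (node_poly x m).
Proof.
  induction m as [|m [r [Hr Hq]]].
  - exists (fun _ => 0). split; [exists (fun _ => 0)|]; intros; simpl; ring.
  - exists (fun t => 1 * (t * r t) + 1 * (-x m * t ^ m + -x m * r t)). split.
    + apply deg_lt_lin; [now apply deg_lt_mul_t|].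
      apply deg_lt_lin; [apply deg_lt_pow | now apply deg_lt_succ].
    + intros t. simpl. rewrite Hq. ring.
Qed.

Lemma node_poly_root (x : nat -> R) (m j : nat) :
  (j < m)%nat -> node_poly x m (x j) = 0.
Proof.
  induction m as [|m IH]; intros Hj; [lia|]. simpl.
  destruct (Nat.eq_dec j m) as [->|Hne]; [ring|]. rewrite IH by lia. ring.
Qed.

Lemma node_poly_bound (x : nat -> R) (d t : R) (m : nat) :
  (forall i, Rabs (t - x i) <= d) -> Rabs (node_poly x m t) <= d ^ m.
Proof.
  intros Hd. induction m as [|m IH]; simpl; [rewrite Rabs_R1; lra|].
  rewrite Rabs_mult, Rmult_comm.
  apply Rmult_le_compat; auto using Rabs_pos.
Qed.

Lemma sum_vanishing_prefix_le (f : nat -> R) (n N : nat) :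
  (1 <= n)%nat -> (forall j, 0 <= f j) -> (forall j, (j < n)%nat -> f j = 0) ->
  sum_f_R0 f N <= sum_f_R0 (fun i => f (n + i)%nat) N.
Proof.
  intros Hn Hpos Hzero.
  assert (Hsplit := tech2 f N (N + n) ltac:(lia)).
  assert (Hshift := tech2 f (n - 1) (N + n) ltac:(lia)).
  replace (S (n - 1)) with n in Hshift by lia.
  replace (N + n - n)%nat with N in Hshift by lia.
  rewrite (sum_eq_R0 f (n - 1)) in Hshift by (intros j Hj; apply Hzero; lia).
  pose proof (cond_pos_sum (fun i => f (S N + i)%nat) (N + n - S N)
                (fun i => Hpos _)).
  lra.
Qed.

Lemma node_poly_L2_bound (a x : nat -> R) (d T : R) (n : nat) :
  (1 <= n)%nat -> (forall j, 0 <= a j) -> (forall j k, Rabs (x j - x k) <= d) ->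
  infinite_sum (fun i => a (n + i)%nat) T ->
  forall N, sum_f_R0 (fun j => a j * node_poly x n (x j) ^ 2) N
            <= d ^ n * d ^ n * T.
Proof.
  intros Hn Ha Hd hT N.
  eapply Rle_trans; [apply sum_vanishing_prefix_le; [exact Hn | | ]|].
  - intros j. apply Rmult_le_pos; [apply Ha | rewrite <- Rsqr_pow2; apply Rle_0_sqr].
  - intros j Hj. rewrite node_poly_root by exact Hj. ring.
  - apply Rle_trans with (sum_f_R0 (fun i => a (n + i)%nat * (d ^ n * d ^ n)) N).
    + apply sum_Rle. intros i _. apply Rmult_le_compat_l; [apply Ha|].
      set (q := node_poly x n (x (n + i)%nat)).
      assert (Hq : Rabs q <= d ^ n) by (apply node_poly_bound; intros; apply Hd).
      rewrite <- pow2_abs. pose proof (Rabs_pos q). simpl. nra.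
    + rewrite <- scal_sum. apply Rmult_le_compat_l.
      * apply Rmult_le_pos; apply pow_le, (Rle_trans _ _ _ (Rabs_pos (x O - x O)) (Hd O O)).
      * apply sum_incr; [exact hT | intros; apply Ha].
Qed.

Theorem theorem5p5
  (x a : nat -> R)
  (hbdd : exists M : R, forall j, Rabs (x j) <= M)
  (hinf : ~ (exists l : list R, forall j, In (x j) l))
  (hpos : forall j, 0 < a j)
  (hsum : exists S : R, infinite_sum a S)
  (d : R)
  (hd : is_lub (fun r => exists j k : nat, r = Rabs (x j - x k)) d)
  (n : nat) (hn : (1 <= n)%nat)
  (c : nat -> R) (hOP : is_monic_OP a x n c)
  (N2 : R) (hN2 : L2sq_is a x (monic_poly n c) N2)
  (T : R) (hT : infinite_sum (fun i => a (n + i)%nat) T) :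
  sqrt N2 <= d ^ n * sqrt T.
Proof.
  assert (Ha : forall j, 0 <= a j) by (intros; apply Rlt_le, hpos).
  assert (Hdiam : forall j k, Rabs (x j - x k) <= d)
    by (intros j k; apply (proj1 hd); eauto).
  assert (Hdn : 0 <= d ^ n)
    by (apply pow_le, (Rle_trans _ _ _ (Rabs_pos (x O - x O)) (Hdiam O O))).
  assert (HT : 0 <= T).
  { apply (Rle_trans _ (sum_f_R0 (fun i => a (n + i)%nat) O)); [apply Ha|].
    apply sum_incr; auto. }
  assert (HN2 : N2 <= d ^ n * d ^ n * T).
  { apply (monic_OP_norm_le a x c n N2 _ (node_poly x n) Ha hOP hN2).
    - apply node_poly_monic.
    - exact (node_poly_L2_bound a x d T n hn Ha Hdiam hT). }
  eapply Rle_trans; [apply sqrt_le_1_alt, HN2|].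
  rewrite sqrt_mult_alt, sqrt_square by (try apply Rmult_le_pos; assumption).
  lra.
Qed.
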